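(* Let $(X,\xi)$ be a probability space, and let $f\in L^1(X,\xi)$ be non-negative. Then there is an increasing $1$-Lipschitz function $\psi:[0,\infty)\to[0,\infty)$ with $\lim_{y\to\infty}\psi(y)=\infty$ such that, setting $\Psi(y)=\int_0^y\psi(z)\,dz$ for $y\ge0$, one has $\Psi(f)\in L^1(X,\xi)$. Moreover, the function $F:[0,\infty)\to[0,\infty)$, $F(y)=\Psi(\log(1+y))$, is increasing and differentiable on $[0,\infty)$, and there exists $M>0$ such that \[ F(y+y')\le F(y)+F(y')+M\quad\text{for all }y,y'\ge0. \] *)

From HB Require Import structures.
From mathcomp Require Import all_boot all_order all_algebra.
From mathcomp Require Import all_classical all_reals all_analysis.
Set Implicit Arguments. Unset Strict Implicit. Unset Printing Implicit Defensive.
Import Order.TTheory GRing.Theory Num.Theory.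
Import numFieldNormedType.Exports.
Local Open Scope classical_set_scope.
Local Open Scope ring_scope.

Definition Psi_of (R : realType) (psi : R -> R) (y : R) : R :=
  Rintegral lebesgue_measure `[0, y] psi.

Definition F_of (R : realType) (psi : R -> R) (y : R) : R :=
  Psi_of psi (ln (1 + y)).

(* Since f is integrable, its tails \int_{f > n} f tend to 0, so there are
   thresholds t_k >= k with k \int_{f > t_k} f <= 2^-(k+1).  Take for psi the
   supremum of the ramps min(k, (y - t_k)_+): each ramp is nondecreasing,
   1-Lipschitz and vanishes below k, so psi is a locally finite maximum with the
   same properties, it vanishes on [0, 1] and psi(t_k + k) >= k.  Since
   Psi(y) <= y psi(y) <= sum_k k y [y > t_k], integrating against xi gives
   \int Psi(f) <= sum_k 2^-(k+1) <= 1.  For F = Psi o log(1 + _), the increments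
   log(1 + y + y') - log(1 + y) <= y'/(1 + y) and
   log(1 + y + y') - log(1 + y') <= y/(1 + y') have product at most 1, which
   together with psi <= Psi + 1 yields F(y + y') <= F(y) + F(y') + 2. *)

From HB Require Import structures.
From mathcomp Require Import all_boot all_order all_algebra.
From mathcomp Require Import all_classical all_reals all_analysis.
From mathcomp Require Import ring lra measurable_realfun.
Set Implicit Arguments. Unset Strict Implicit. Unset Printing Implicit Defensive.
Import Order.TTheory GRing.Theory Num.Theory.
Import numFieldNormedType.Exports.
Local Open Scope classical_set_scope.
Local Open Scope ring_scope.

Lemma continuous_integrable_itv (R : realType) (g : R -> R) a b :
  continuous g -> (@lebesgue_measure R).-integrable `[a, b] (EFin \o g).
Proof.
move=> cg; apply: continuous_compact_integrable; first exact: segment_compact.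
exact: continuous_subspaceT.
Qed.

Lemma lnD1_subr_le (R : realType) (y y' : R) : 0 <= y -> 0 <= y' ->
  ln (1 + (y + y')) - ln (1 + y) <= y' / (1 + y).
Proof.
move=> y0 y'0; have y1 : 0 < 1 + y by lra.
have u0 : 0 <= y' / (1 + y) by rewrite divr_ge0 //; lra.
have -> : 1 + (y + y') = (1 + y) * (1 + y' / (1 + y)) by field; lra.
rewrite lnM ?posrE //; last by lra.
by rewrite addrAC subrr add0r le_ln1Dx //; lra.
Qed.

Section Psi.
Variables (R : realType) (psi : R -> R).
Hypothesis psi_nd : {homo psi : y z / y <= z}.
Hypothesis psi_lip : forall y z, y <= z -> psi z <= psi y + (z - y).
Hypothesis psi_eq0 : forall y, y <= 1 -> psi y = 0.

Local Notation mu := (@lebesgue_measure R).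
Local Notation Psi := (Psi_of psi).
Local Notation F := (F_of psi).

Lemma psi_ge0 y : 0 <= psi y.
Proof. by rewrite -(@psi_eq0 (Num.min y 1)) ?ge_min ?lexx ?orbT // psi_nd // ge_min lexx. Qed.

Lemma psi_norm_lip y z : `|psi y - psi z| <= `|y - z|.
Proof.
wlog yz : y z / y <= z.
  move=> wlog; have [/wlog //|/ltW/wlog] := leP y z.
  by rewrite distrC [`|y - z|]distrC.
rewrite distrC [`|y - z|]distrC !ger0_norm ?subr_ge0 ?psi_nd //.
by have := psi_lip yz; lra.
Qed.

Lemma psi_continuous : continuous psi.
Proof.
move=> x; apply/cvgrPdist_le => /= e e0; near=> y.
apply: le_trans (psi_norm_lip x y) _; near: y.
by exists e => //= z; rewrite /ball_ /= => /ltW.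
Unshelve. all: by end_near.
Qed.

Lemma PsiB a b : 0 <= a -> a <= b -> Psi b - Psi a = \int[mu]_(x in `]a, b]) psi x.
Proof.
move=> a0 ab; rewrite /Psi_of (@Rintegral_itvB _ psi (BLeft 0) (BRight b) a) ?bnd_simp //.
exact: continuous_integrable_itv psi_continuous.
Qed.

Lemma PsiB_bounds a b : 0 <= a -> a <= b ->
  psi a * (b - a) <= Psi b - Psi a <= psi b * (b - a).
Proof.
move=> a0; rewrite le_eqVlt => /predU1P[<-|ab]; first by rewrite !subrr !mulr0 lexx.
have intD g : continuous g -> mu.-integrable `]a, b] (EFin \o g).
  move=> cg; apply: integrableS (continuous_integrable_itv a b cg) => //.
  exact: subset_itv_oc_cc.
have muab : fine (mu `]a, b]) = b - a by rewrite lebesgue_measure_itv /= lte_fin ab.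
have int_cst c : mu.-integrable `]a, b] (EFin \o fun=> c) by apply/intD/cst_continuous.
have int_psi := intD _ psi_continuous.
rewrite PsiB ?(ltW ab) // -muab -!Rintegral_cst //.
apply/andP; split; apply: le_Rintegral => // x; rewrite /= in_itv /= => /andP[ax xb].
  exact/psi_nd/ltW.
exact: psi_nd.
Qed.

Lemma Psi0 : Psi 0 = 0.
Proof. by rewrite /Psi_of set_itv1 Rintegral_set1. Qed.

Lemma Psi_ge0 y : 0 <= y -> 0 <= Psi y.
Proof.
move=> y0; have /andP[+ _] := PsiB_bounds (lexx 0) y0.
by rewrite Psi0 !subr0; apply: le_trans; rewrite mulr_ge0 ?psi_ge0.
Qed.

Lemma Psi_nd a b : 0 <= a -> a <= b -> Psi a <= Psi b.
Proof.
move=> a0 ab; rewrite -subr_ge0; have /andP[+ _] := PsiB_bounds a0 ab.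
by apply: le_trans; rewrite mulr_ge0 ?psi_ge0 ?subr_ge0.
Qed.

Lemma Psi_le_mul y : 0 <= y -> Psi y <= y * psi y.
Proof.
by move=> y0; have /andP[_] := PsiB_bounds (lexx 0) y0; rewrite Psi0 !subr0 mulrC.
Qed.

Lemma Psi_eq0 y : y <= 1 -> Psi y = 0.
Proof.
move=> y1; have [y0|y0] := ltP y 0.
  by rewrite /Psi_of set_itv_ge ?Rintegral_set0 // bnd_simp -ltNge.
have /andP[] := PsiB_bounds (lexx 0) y0.
by rewrite Psi0 !psi_eq0 ?ler01 // !mul0r !subr0 => ? ?; apply: le_anti; apply/andP.
Qed.

Lemma psi_le_PsiD1 y : 0 <= y -> psi y <= Psi y + 1.
Proof.
move=> y0; have [y1|y1] := leP y 1; first by rewrite psi_eq0 // ler_wpDl // Psi_ge0.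
have y10 : 0 <= y - 1 by lra.
have y1y : y - 1 <= y by lra.
have /andP[+ _] := PsiB_bounds y10 y1y.
have := psi_lip y1y; have := Psi_ge0 y10.
rewrite (_ : y - (y - 1) = 1) ?mulr1; lra.
Qed.

Lemma Psi_derivable y : 0 < y -> derivable Psi y 1.
Proof.
move=> y0; have yy1 : y < y + 1 by lra.
have [] // := continuous_FTC1_closed yy1 _ y0 (@psi_continuous y).
exact: continuous_integrable_itv psi_continuous.
Qed.

Lemma Psi_continuous : continuous Psi.
Proof.
move=> y; have [y1|y1] := ltP y 1; last first.
  by apply/differentiable_continuous/derivable1_diffP/Psi_derivable; lra.
rewrite /continuous_at Psi_eq0 ?ltW //; apply: cvg_near_cst.
by near=> z; apply/Psi_eq0/ltW; near: z; exact: lt_nbhsl.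
Unshelve. all: by end_near.
Qed.

(* Psi s - Psi a <= psi s (s - a) <= (psi b + (s - b)) (s - a) <= psi b + 1 <= Psi b + 2. *)
Lemma Psi_le_addD2 a b s : 0 <= a <= s -> 0 <= b <= s ->
  s - a <= 1 -> (s - a) * (s - b) <= 1 -> Psi s <= Psi a + Psi b + 2.
Proof.
move=> /andP[a0 as_] /andP[b0 bs] sa1 sab1.
have /andP[_ Psi_as] := PsiB_bounds a0 as_.
have psi_sb := psi_lip bs.
have psi_b := psi_le_PsiD1 b0.
have psi_bsa : psi b * (s - a) <= psi b by rewrite ler_piMr ?psi_ge0 //; lra.
have : psi s * (s - a) <= psi b * (s - a) + (s - a) * (s - b).
  by rewrite [_ * (s - b)]mulrC -mulrDl ler_wpM2r //; lra.
lra.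
Qed.

Lemma F_ge0 y : 0 <= y -> 0 <= F y.
Proof. by move=> y0; apply/Psi_ge0/ln_ge0; lra. Qed.

Lemma F_nd y z : 0 <= y -> y <= z -> F y <= F z.
Proof.
move=> y0 yz; apply: Psi_nd; first by apply: ln_ge0; lra.
by rewrite ler_ln ?posrE; lra.
Qed.

Lemma F_derivable y : 0 < y -> derivable F y 1.
Proof.
move=> y0; apply/derivable1_diffP.
have -> : F = Psi \o ((@ln R) \o (fun x => 1 + x)) by [].
apply: differentiable_comp; last first.
  by apply/derivable1_diffP/Psi_derivable/ln_gt0; lra.
apply: differentiable_comp; first exact: differentiableD.
by apply/derivable1_diffP/ex_derive/is_derive1_ln; lra.
Qed.

Lemma cvg_F_right_quotient0 : cvg ((fun h => h^-1 * (F h - F 0)) x @[x --> 0^'+]).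
Proof.
apply/cvg_ex; exists 0; apply: cvg_near_cst; near=> h.
have h0 : 0 < h by near: h; exact: nbhs_right_gt.
have h1 : h < 1 by near: h; apply: nbhs_right_lt; lra.
rewrite /F_of addr0 ln1 Psi0 Psi_eq0 ?subr0 ?mulr0 //.
by apply: le_trans (le_ln1Dx _) _; lra.
Unshelve. all: by end_near.
Qed.

Lemma F_le_addD2 y y' : 0 <= y -> 0 <= y' -> F (y + y') <= F y + F y' + 2.
Proof.
wlog y'y : y y' / y' <= y.
  move=> wlog y0 y'0; have [/wlog|/ltW/wlog] := leP y' y; first exact.
  by rewrite addrC [F y + _]addrC; exact.
move=> y0 y'0; rewrite /F_of.
have y1 : 0 < 1 + y by lra.
have y'1 : 0 < 1 + y' by lra.
have sa_le := lnD1_subr_le y0 y'0.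
have sb_le : ln (1 + (y + y')) - ln (1 + y') <= y / (1 + y').
  by rewrite [y + y']addrC; exact: lnD1_subr_le.
have sa_ge0 : 0 <= ln (1 + (y + y')) - ln (1 + y).
  by rewrite subr_ge0 ler_ln ?posrE //; lra.
have sb_ge0 : 0 <= ln (1 + (y + y')) - ln (1 + y').
  by rewrite subr_ge0 ler_ln ?posrE //; lra.
apply: Psi_le_addD2.
- by rewrite -[ln (1 + y) <= _]subr_ge0 sa_ge0 andbT ln_ge0 //; lra.
- by rewrite -[ln (1 + y') <= _]subr_ge0 sb_ge0 andbT ln_ge0 //; lra.
- by apply: le_trans sa_le _; rewrite ler_pdivrMr // mul1r; lra.
- apply: le_trans (_ : y' / (1 + y) * (y / (1 + y')) <= 1).
    exact: ler_pM.
  rewrite mulf_div ler_pdivrMr ?mulr_gt0 // mul1r.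
  by clear -y0 y'0; nra.
Qed.

End Psi.

Section IncrLip.
Variable R : realDomainType.
Implicit Types a b d : R.

Lemma max_incr_lip a a' b b' d : a <= a' <= a + d -> b <= b' <= b + d ->
  Num.max a b <= Num.max a' b' <= Num.max a b + d.
Proof.
move=> /andP[? ?] /andP[? ?].
by case: (lerP a b); case: (lerP a' b') => *; apply/andP; split; lra.
Qed.

Lemma min_incr_lip a a' b b' d : a <= a' <= a + d -> b <= b' <= b + d ->
  Num.min a b <= Num.min a' b' <= Num.min a b + d.
Proof.
move=> /andP[? ?] /andP[? ?].
by case: (lerP a b); case: (lerP a' b') => *; apply/andP; split; lra.
Qed.

Lemma bigmax_incr_lip (I : Type) (r : seq I) (F G : I -> R) x0 d :
  0 <= d -> (forall i, F i <= G i <= F i + d) ->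
  \big[Num.max/x0]_(i <- r) F i <= \big[Num.max/x0]_(i <- r) G i
    <= \big[Num.max/x0]_(i <- r) F i + d.
Proof.
move=> d0 FG; apply: (big_ind2 (fun u v => u <= v <= u + d)) => //.
  by rewrite lexx lerDl.
by move=> *; exact: max_incr_lip.
Qed.

End IncrLip.

Section Ramps.
Variables (R : realType) (t : nat -> nat).
Hypothesis t_ge : forall k, (k <= t k)%N.

Definition ramp k (y : R) : R := Num.min k%:R (Num.max 0 (y - (t k)%:R)).

Definition ramp_max n y := \big[Num.max/0]_(k < n) ramp k y.

(* Ramps with k >= y vanish at y, so this is the supremum of all ramps at y. *)
Definition ramp_sup y := ramp_max (Num.truncn y).+1 y.

Lemma ramp_ge0 k y : 0 <= ramp k y.
Proof. by rewrite le_min ler0n le_max lexx. Qed.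

Lemma ramp_le k y : ramp k y <= if (t k)%:R < y then k%:R else 0.
Proof.
rewrite /ramp; case: ltP => ty; first by rewrite ge_min lexx.
by rewrite ge_min ge_max lexx subr_le0 ty orbT.
Qed.

Lemma ramp_eq0 k y : y <= k%:R -> ramp k y = 0.
Proof.
move=> yk; apply/le_anti; rewrite ramp_ge0 andbT; apply: le_trans (ramp_le k y) _.
by rewrite ltNge (le_trans yk) ?ler_nat.
Qed.

Lemma ramp_eq k y : (t k + k)%:R <= y -> ramp k y = k%:R.
Proof.
rewrite natrD => tky; rewrite /ramp; apply/min_idPl.
by rewrite le_max lerBrDr addrC tky orbT.
Qed.

Lemma ramp_incr_lip k y z : y <= z -> ramp k y <= ramp k z <= ramp k y + (z - y).
Proof.
move=> yz; have d0 : 0 <= z - y by rewrite subr_ge0.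
apply: min_incr_lip; first by rewrite lexx lerDl.
apply: max_incr_lip; first by rewrite lexx lerDl.
by rewrite lerD2r yz /=; lra.
Qed.

Lemma ramp_max_le n m y : y <= m%:R -> ramp_max n y <= ramp_max m y.
Proof.
move=> ym; apply: bigmax_le => [|i _]; first exact: bigmax_ge_id.
have [im|mi] := ltnP i m; first exact: (bigmax_sup (Ordinal im)).
by rewrite ramp_eq0 ?bigmax_ge_id // (le_trans ym) ?ler_nat.
Qed.

Lemma ramp_supE n y : y <= n%:R -> ramp_sup y = ramp_max n y.
Proof.
move=> yn; apply/le_anti; rewrite ramp_max_le //=.
by apply/ramp_max_le/ltW/truncnS_gt.
Qed.

Lemma ramp_le_sup k y : ramp k y <= ramp_sup y.
Proof.
have yk : y <= (Num.truncn y + k).+1%:R.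
  by apply: le_trans (ltW (truncnS_gt y)) _; rewrite ler_nat ltnS leq_addr.
rewrite (ramp_supE yk); apply: (bigmax_sup (Ordinal (_ : k < _)%N)) => //.
by rewrite ltnS leq_addl.
Qed.

Lemma ramp_sup_incr_lip y z : y <= z ->
  ramp_sup y <= ramp_sup z <= ramp_sup y + (z - y).
Proof.
move=> yz; have zn := ltW (truncnS_gt z).
rewrite (ramp_supE (le_trans yz zn)) (ramp_supE zn).
by apply: bigmax_incr_lip => [|k]; [rewrite subr_ge0 | exact: ramp_incr_lip].
Qed.

Lemma ramp_sup_nd : {homo ramp_sup : y z / y <= z}.
Proof. by move=> y z /ramp_sup_incr_lip/andP[]. Qed.

Lemma ramp_sup_lip y z : y <= z -> ramp_sup z <= ramp_sup y + (z - y).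
Proof. by move=> /ramp_sup_incr_lip/andP[]. Qed.

Lemma ramp_sup_eq0 y : y <= 1 -> ramp_sup y = 0.
Proof.
move=> y1; rewrite (ramp_supE (n := 1%N)) // /ramp_max big_ord_recl big_ord0.
have ramp00 : ramp 0 y = 0.
  by apply/le_anti; rewrite ramp_ge0 andbT; apply: le_trans (ramp_le 0 y) _; case: ifP.
by rewrite ramp00 maxxx.
Qed.

Lemma ramp_sup_cvgy : ramp_sup y @[y --> +oo] --> +oo.
Proof.
apply/cvgryPge => A; have Ak := ltW (truncnS_gt A).
near=> y; apply: le_trans Ak (le_trans _ (ramp_le_sup _ y)).
by rewrite ramp_eq //; near: y; exact: nbhs_pinfty_ge.
Unshelve. all: by end_near.
Qed.

Lemma ramp_sup_le_sum y :
  ramp_sup y <= \sum_(k < (Num.truncn y).+1) if (t k)%:R < y then k%:R else 0.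
Proof.
have le0 k : 0 <= (if (t k)%:R < y then k%:R else 0 : R) by case: ifP.
apply: bigmax_le => [|i _]; first exact: sumr_ge0.
apply: le_trans (ramp_le i y) _.
by rewrite (bigD1 i) //= lerDl sumr_ge0.
Qed.

Lemma Psi_ramp_sup_le y : 0 <= y -> Psi_of ramp_sup y <=
  \sum_(k < (Num.truncn y).+1) k%:R * (if (t k)%:R < y then y else 0).
Proof.
move=> y0; apply: le_trans (Psi_le_mul ramp_sup_nd ramp_sup_lip y0) _.
apply: le_trans (ler_wpM2l y0 (ramp_sup_le_sum y)) _.
rewrite mulr_sumr ler_sum // => k _.
by case: ifP => _; rewrite ?mulr0 // mulrC.
Qed.

End Ramps.

Section Tails.
Context d (X : measurableType d) (R : realType) (mu : {measure set X -> \bar R}).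
Variable f : X -> R.
Hypothesis f_ge0 : forall x, 0 <= f x.
Hypothesis f_int : mu.-integrable setT (EFin \o f).

Definition tail_part (n : nat) x := if n%:R < f x then f x else 0.

Lemma tail_part_ge0 n x : 0 <= tail_part n x.
Proof. by rewrite /tail_part; case: ifP. Qed.

Lemma measurable_tail_part n : measurable_fun setT (tail_part n).
Proof.
have /integrableP[/measurable_EFinP mf _] := f_int.
by apply: measurable_fun_ifT => //; exact: measurable_fun_ltr.
Qed.

Lemma tail_integral_small e : 0 < e ->
  \forall n \near \oo, (\int[mu]_x (tail_part n x)%:E <= e%:E)%E.
Proof.
move=> e0.
have tail_cvg0 : {ae mu, forall x, setT x -> (tail_part n x)%:E @[n --> \oo] --> 0%E}.
  apply: aeW => x _; apply: cvg_near_cst; near=> n.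
  rewrite /tail_part ifF //; apply/negbTE; rewrite -leNgt.
  apply: le_trans (ltW (truncnS_gt (f x))) _; rewrite ler_nat.
  by near: n; exact: nbhs_infty_ge.
have tail_le_f : {ae mu, forall x n, setT x -> (`|(tail_part n x)%:E| <= (f x)%:E)%E}.
  by apply: aeW => x n _; rewrite gee0_abs ?lee_fin ?tail_part_ge0 // /tail_part; case: ifP.
have [_ _] := dominated_convergence measurableT
  (fun n => (measurable_EFinP _ _).2 (measurable_tail_part n))
  (measurable_cst 0%E) tail_cvg0 f_int tail_le_f.
rewrite integral0 => /fine_cvgP[tail_fin /cvgr_le/(_ _ e0) tail_le].
near=> n.
have n_fin : (\int[mu]_x (tail_part n x)%:E)%E \is a fin_num by near: n; exact: tail_fin.
by rewrite -(fineK n_fin) lee_fin; near: n; exact: tail_le.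
Unshelve. all: by end_near.
Qed.

Lemma exists_tail_index k : exists n, (k <= n)%N /\
  (k%:R%:E * \int[mu]_x (tail_part n x)%:E <= (1 / (2 ^ k.+1)%:R)%:E)%E.
Proof.
pose e : R := 1 / (2 ^ k.+1)%:R / k.+1%:R.
have e0 : 0 < e by rewrite !divr_gt0 // ltr0n expn_gt0.
have [N _ small] := tail_integral_small e0.
exists (maxn N k); split; first exact: leq_maxr.
apply: le_trans (lee_wpmul2l _ (small _ (leq_maxl N k))) _; first by rewrite lee_fin.
rewrite -EFinM lee_fin /e mulrCA ger_pMr ?divr_gt0 ?ltr0n ?expn_gt0 //.
by rewrite ler_pdivrMr // mul1r ler_nat.
Qed.

Section PsiIntegrable.
Variable t : nat -> nat.
Hypothesis t_ge : forall k, (k <= t k)%N.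
Hypothesis tail_t : forall k,
  (k%:R%:E * \int[mu]_x (tail_part (t k) x)%:E <= (1 / (2 ^ k.+1)%:R)%:E)%E.

Local Notation psi := (ramp_sup t).
Let psi_nd := @ramp_sup_nd R t t_ge.
Let psi_lip := @ramp_sup_lip R t t_ge.
Let psi_eq0 := @ramp_sup_eq0 R t t_ge.

Lemma Psi_ramp_sup_le_series x :
  ((Psi_of psi (f x))%:E <= \sum_(k <oo) (k%:R * tail_part (t k) x)%:E)%E.
Proof.
pose N := (Num.truncn (f x)).+1.
apply: le_trans (_ : _ <= \sum_(0 <= k < N) (k%:R * tail_part (t k) x)%:E)%E _.
  by rewrite big_mkord sumEFin lee_fin; exact: Psi_ramp_sup_le.
by apply: nneseries_lim_ge => k _ _; rewrite lee_fin mulr_ge0 ?tail_part_ge0.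
Qed.

Lemma integrable_Psi_ramp_sup : mu.-integrable setT (fun x => (Psi_of psi (f x))%:E).
Proof.
have mPsi : measurable_fun setT (fun x => Psi_of psi (f x)).
  apply: measurableT_comp; last by have /integrableP[/measurable_EFinP] := f_int.
  by apply: continuous_measurable_fun; apply: Psi_continuous.
have mtail k : measurable_fun setT (fun x => (k%:R * tail_part (t k) x)%:E).
  by apply/measurable_EFinP/measurable_funM => //; exact: measurable_tail_part.
apply/integrableP; split; first exact/measurable_EFinP.
apply: (@le_lt_trans _ _ (\int[mu]_x \sum_(k <oo) (k%:R * tail_part (t k) x)%:E)%E).
  apply: ge0_le_integral => //.
  - by apply: measurableT_comp => //; exact/measurable_EFinP.
  - by apply: ge0_emeasurable_sum => // k x _; rewrite lee_fin mulr_ge0 ?tail_part_ge0.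
  - move=> x _; rewrite gee0_abs ?lee_fin; first exact: Psi_ramp_sup_le_series.
    by apply: Psi_ge0.
rewrite integral_nneseries //; last first.
  by move=> k x _; rewrite lee_fin mulr_ge0 ?tail_part_ge0.
apply: (@le_lt_trans _ _ 1%:E); last exact: ltey.
apply: le_trans (epsilon_trick0 xpredT ler01).
apply: lee_nneseries => k _.
  by move=> _; apply: integral_ge0 => x _; rewrite lee_fin mulr_ge0 ?tail_part_ge0.
under eq_integral do rewrite EFinM.
rewrite ge0_integralZl_EFin //; first by move=> x _; rewrite lee_fin tail_part_ge0.
exact/measurable_EFinP/measurable_tail_part.
Qed.

End PsiIntegrable.

End Tails.

Theorem theorem3p5 (d : measure_display) (X : measurableType d) (R : realType)
  (xi : probability X R) (f : X -> R)
  (f_ge0 : forall x, 0 <= f x)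
  (f_int : xi.-integrable setT (fun x => (f x)%:E)) :
  exists psi : R -> R,
    [/\ (forall y, 0 <= y -> 0 <= psi y),
        (forall y z, 0 <= y -> y <= z -> psi y <= psi z),
        (forall y z, 0 <= y -> 0 <= z -> `|psi y - psi z| <= `|y - z|),
        psi x @[x --> +oo] --> +oo &
        xi.-integrable setT (fun x => (Psi_of psi (f x))%:E)] /\
    [/\ (forall y, 0 <= y -> 0 <= F_of psi y),
        (forall y z, 0 <= y -> y <= z -> F_of psi y <= F_of psi z),
        (forall y, 0 < y -> derivable (F_of psi) y 1),
        cvg ((fun h => h^-1 * (F_of psi h - F_of psi 0)) x @[x --> 0^'+]) &
        exists M : R, 0 < M /\
          forall y y', 0 <= y -> 0 <= y' ->
            F_of psi (y + y') <= F_of psi y + F_of psi y' + M].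
Proof.
have /choice[t t_tail] := exists_tail_index f_ge0 f_int.
have t_ge k := (t_tail k).1.
have psi_nd := @ramp_sup_nd R _ t_ge; have psi_lip := @ramp_sup_lip R _ t_ge.
have psi_eq0 := @ramp_sup_eq0 R _ t_ge.
exists (ramp_sup t); split; split.
- by move=> y _; apply: psi_ge0.
- by move=> y z _ /psi_nd.
- by move=> y z _ _; apply: psi_norm_lip.
- exact: ramp_sup_cvgy.
- by apply: integrable_Psi_ramp_sup => // k; case: (t_tail k).
- by apply: F_ge0.
- by apply: F_nd.
- by apply: F_derivable.
- by apply: cvg_F_right_quotient0.
- by exists 2; split => // y y'; apply: F_le_addD2.
Qed.
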